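(* Given a closed $\lambda$-abstraction $\lambda x.\vec t$, we have $\lambda x.\vec t\in[\![\sharp\mathbb B\rightarrow\sharp\mathbb B]\!]$ if and only if there are two value distributions $\vec v_1,\vec v_2\in[\![\sharp\mathbb B]\!]$ such that $\vec t[x:=\mathtt{tt}]\succ^*\vec v_1$, $\vec t[x:=\mathtt{ff}]\succ^*\vec v_2$ and $\langle\vec v_1|\vec v_2\rangle=0$.
   Context: Calculus. Pure values: $v,w::=x\mid\lambda x.\vec{s}\mid *\mid (v_1,v_2)\mid \mathtt{inl}(v)\mid\mathtt{inr}(v)$. Pure terms: $s,t::=v\mid s\,t\mid t;\vec{s}\mid \mathtt{let}\,(x_1,x_2)=t\,\mathtt{in}\,\vec{s}\mid \mathtt{match}\,t\,\{\mathtt{inl}\,x_1\mapsto\vec{s}_1\mid\mathtt{inr}\,x_2\mapsto\vec{s}_2\}$. Term distributions: $\vec{t}::=\vec{0}\mid t\mid \vec{s}+\vec{t}\mid\alpha\cdot\vec{t}$ ($\alpha\in\mathbb{C}$), considered at top level modulo the weak-vector-space congruence $\equiv$ (commutative monoid for $+,\vec0$; $1\cdot\vec t\equiv\vec t$; $\alpha\cdot(\beta\cdot\vec t)\equiv\alpha\beta\cdot\vec t$; both distributivity laws), which does not act inside pure terms and does not identify $0\cdot t$ with $\vec 0$; every distribution has a unique canonical form $\sum_i\alpha_it_i$ with distinct pure $t_i$. Constructs are extended by linearity. $\mathtt{tt}:=\mathtt{inl}( * )$, $\mathtt{ff}:=\mathtt{inr}( * )$. $\vec t[x:=w]$ is substitution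 of a pure value; $\vec t\langle x:=\vec w\rangle=\sum_j\beta_j\vec t[x:=w_j]$ for $\vec w=\sum_j\beta_jw_j$. Atomic evaluation $\triangleright$: $(\lambda x.\vec t)v\triangleright\vec t[x:=v]$, $*;\vec s\triangleright\vec s$, $\mathtt{let}\,(x,y)=(v,w)\,\mathtt{in}\,\vec s\triangleright\vec s[x:=v,y:=w]$, $\mathtt{match}\,\mathtt{inl}(v)\{\ldots\}\triangleright\vec s_1[x_1:=v]$, $\mathtt{match}\,\mathtt{inr}(v)\{\ldots\}\triangleright\vec s_2[x_2:=v]$, plus closure rules evaluating the argument of an application, then the function once the argument is a value, and the scrutinee of $;$, let, match. $\vec t\succ\vec t'$ iff $\vec t\equiv\alpha\cdot s+\vec r$, $\vec t'\equiv\alpha\cdot\vec s'+\vec r$ with $s\triangleright\vec s'$; $\succ^*$ is its reflexive-transitive closure. Semantics. For closed value distributions in canonical form, $\langle\sum_i\alpha_iv_i|\sum_j\beta_jw_j\rangle=\sum_{i,j}\overline{\alpha_i}\beta_j\delta_{v_i,w_j}$, $\|\vec v\|=\sqrt{\langle\vec v|\vec v\rangle}$, $\mathcal S$ the unit sphere. $[\![\mathbb U]\!]=\{*\}$, $[\![A+B]\!]=\{\mathtt{inl}(\vec v):\vec v\in[\![A]\!]\}\cup\{\mathtt{inr}(\vec w):\vec w\in[\![B]\!]\}$, $[\![\sharp A]\!]=\mathrm{Span}([\![A]\!])\cap\mathcal S$, $\mathbb B=\mathbb U+\mathbb U$, $[\![A\rightarrow B]\!]=\{\lambda x.\vec t\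 \text{closed}:\forall\vec v\in[\![A]\!],\ \vec t\langle x:=\vec v\rangle\Vdash B\}$ with $\vec t\Vdash B$ meaning $\vec t\succ^*\vec v$ for some $\vec v\in[\![B]\!]$. *)

From Stdlib Require Import Reals List Arith ClassicalEpsilon.
From Coquelicot Require Import Coquelicot.
Import ListNotations.

Definition vname := nat.

Inductive val : Type :=
  | VVar  : vname -> val
  | VLam  : vname -> tdist -> val
  | VStar : val
  | VPair : val -> val -> val
  | VInl  : val -> val
  | VInr  : val -> val
with term : Type :=
  | TVal   : val -> term
  | TApp   : term -> term -> term
  | TSeq   : term -> tdist -> term
  | TLet   : vname -> vname -> term -> tdist -> term
  | TMatch : term -> vname -> tdist -> vname -> tdist -> term
with tdist : Type :=
  | DZero : tdist
  | DTerm : term -> tdist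
  | DPlus : tdist -> tdist -> tdist
  | DScal : C -> tdist -> tdist.

Definition vtt : val := VInl VStar.
Definition vff : val := VInr VStar.

Fixpoint fv_val (v : val) : list vname :=
  match v with
  | VVar x => [x]
  | VLam x d => remove Nat.eq_dec x (fv_dist d)
  | VStar => []
  | VPair v1 v2 => fv_val v1 ++ fv_val v2
  | VInl v1 => fv_val v1
  | VInr v1 => fv_val v1
  end
with fv_term (t : term) : list vname :=
  match t with
  | TVal v => fv_val v
  | TApp s u => fv_term s ++ fv_term u
  | TSeq u d => fv_term u ++ fv_dist d
  | TLet x y u d => fv_term u ++ remove Nat.eq_dec y (remove Nat.eq_dec x (fv_dist d))
  | TMatch u x1 d1 x2 d2 =>
      fv_term u ++ remove Nat.eq_dec x1 (fv_dist d1) ++ remove Nat.eq_dec x2 (fv_dist d2)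
  end
with fv_dist (d : tdist) : list vname :=
  match d with
  | DZero => []
  | DTerm t => fv_term t
  | DPlus a b => fv_dist a ++ fv_dist b
  | DScal _ a => fv_dist a
  end.

Definition closed_val (v : val) : Prop := fv_val v = [].

(* Substitution of a (closed) pure value w for x: d[x:=w]. *)
Fixpoint subst_val (v : val) (x : vname) (w : val) : val :=
  match v with
  | VVar y => if Nat.eqb x y then w else VVar y
  | VLam y d => if Nat.eqb x y then VLam y d else VLam y (subst_dist d x w)
  | VStar => VStar
  | VPair v1 v2 => VPair (subst_val v1 x w) (subst_val v2 x w)
  | VInl v1 => VInl (subst_val v1 x w)
  | VInr v1 => VInr (subst_val v1 x w)
  end
with subst_term (t : term) (x : vname) (w : val) : term :=
  match t with
  | TVal v => TVal (subst_val v x w)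
  | TApp s u => TApp (subst_term s x w) (subst_term u x w)
  | TSeq u d => TSeq (subst_term u x w) (subst_dist d x w)
  | TLet y1 y2 u d =>
      TLet y1 y2 (subst_term u x w)
        (if orb (Nat.eqb x y1) (Nat.eqb x y2) then d else subst_dist d x w)
  | TMatch u y1 d1 y2 d2 =>
      TMatch (subst_term u x w)
        y1 (if Nat.eqb x y1 then d1 else subst_dist d1 x w)
        y2 (if Nat.eqb x y2 then d2 else subst_dist d2 x w)
  end
with subst_dist (d : tdist) (x : vname) (w : val) : tdist :=
  match d with
  | DZero => DZero
  | DTerm t => DTerm (subst_term t x w)
  | DPlus a b => DPlus (subst_dist a x w) (subst_dist b x w)
  | DScal c a => DScal c (subst_dist a x w)
  end.

Fixpoint dmap (f : term -> term) (d : tdist) : tdist :=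
  match d with
  | DZero => DZero
  | DTerm t => DTerm (f t)
  | DPlus a b => DPlus (dmap f a) (dmap f b)
  | DScal c a => DScal c (dmap f a)
  end.

(* Bilinear substitution  d<x := w>  = sum_j beta_j d[x:=w_j]  for a value
   distribution w = sum_j beta_j w_j (non-value leaves never occur). *)
Fixpoint subst_lin (d : tdist) (x : vname) (w : tdist) : tdist :=
  match w with
  | DZero => DZero
  | DTerm (TVal u) => subst_dist d x u
  | DTerm _ => DZero
  | DPlus a b => DPlus (subst_lin d x a) (subst_lin d x b)
  | DScal c a => DScal c (subst_lin d x a)
  end.

Definition teq_dec (t u : term) : {t = u} + {t <> u} :=
  excluded_middle_informative (t = u).

Fixpoint cinsert (p : term * C) (l : list (term * C)) : list (term * C) :=
  match l with
  | [] => [p]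
  | q :: l' => if teq_dec (fst p) (fst q) then (fst q, Cplus (snd p) (snd q)) :: l'
               else q :: cinsert p l'
  end.

Fixpoint canon (d : tdist) : list (term * C) :=
  match d with
  | DZero => []
  | DTerm t => [(t, RtoC 1)]
  | DPlus a b => fold_right cinsert (canon b) (canon a)
  | DScal c a => map (fun p => (fst p, Cmult c (snd p))) (canon a)
  end.

Fixpoint clookup (t : term) (l : list (term * C)) : option C :=
  match l with
  | [] => None
  | q :: l' => if teq_dec t (fst q) then Some (snd q) else clookup t l'
  end.

(* The weak-vector-space congruence, via equality of canonical forms. *)
Definition deq (d e : tdist) : Prop := forall t, clookup t (canon d) = clookup t (canon e).

Inductive atomic : term -> tdist -> Prop :=
  | At_beta : forall x b v, atomic (TApp (TVal (VLam x b)) (TVal v)) (subst_dist b x v)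
  | At_seq : forall s, atomic (TSeq (TVal VStar) s) s
  | At_let : forall x y v w s,
      atomic (TLet x y (TVal (VPair v w)) s) (subst_dist (subst_dist s x v) y w)
  | At_inl : forall v x1 s1 x2 s2,
      atomic (TMatch (TVal (VInl v)) x1 s1 x2 s2) (subst_dist s1 x1 v)
  | At_inr : forall v x1 s1 x2 s2,
      atomic (TMatch (TVal (VInr v)) x1 s1 x2 s2) (subst_dist s2 x2 v)
  | At_app_arg : forall s t t', atomic t t' -> atomic (TApp s t) (dmap (TApp s) t')
  | At_app_fun : forall s s' v, atomic s s' ->
      atomic (TApp s (TVal v)) (dmap (fun u => TApp u (TVal v)) s')
  | At_seq_ctx : forall t t' b, atomic t t' -> atomic (TSeq t b) (dmap (fun u => TSeq u b) t')
  | At_let_ctx : forall x y t t' b, atomic t t' ->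
      atomic (TLet x y t b) (dmap (fun u => TLet x y u b) t')
  | At_match_ctx : forall t t' x1 s1 x2 s2, atomic t t' ->
      atomic (TMatch t x1 s1 x2 s2) (dmap (fun u => TMatch u x1 s1 x2 s2) t').

Definition red (d d' : tdist) : Prop :=
  exists (a : C) (s : term) (s' r : tdist),
    deq d (DPlus (DScal a (DTerm s)) r) /\ deq d' (DPlus (DScal a s') r) /\ atomic s s'.

Inductive red_star : tdist -> tdist -> Prop :=
  | RS_refl : forall d, red_star d d
  | RS_step : forall d1 d2 d3, red d1 d2 -> red_star d2 d3 -> red_star d1 d3.

Definition C_0 : C := RtoC 0.
Definition csum (l : list C) : C := fold_right Cplus (RtoC 0) l.

Definition inner (d e : tdist) : C :=
  csum (map (fun p => csum (map (fun q =>
          Cmult (Cmult (Cconj (snd p)) (snd q))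
                (if teq_dec (fst p) (fst q) then RtoC 1 else RtoC 0)) (canon e)))
       (canon d)).

Definition dnorm (d : tdist) : R := sqrt (Re (inner d d)).

Inductive ty : Type :=
  | TyU : ty
  | TySum : ty -> ty -> ty
  | TySharp : ty -> ty
  | TyArrow : ty -> ty -> ty.

Definition TyB : ty := TySum TyU TyU.

Fixpoint lincomb (l : list (C * tdist)) : tdist :=
  match l with
  | [] => DZero
  | (a, u) :: l' => DPlus (DScal a u) (lincomb l')
  end.

Definition Span (X : tdist -> Prop) (d : tdist) : Prop :=
  exists l : list (C * tdist), List.Forall (fun p => X (snd p)) l /\ deq d (lincomb l).

Definition inl_t (t : term) : term :=
  match t with TVal v => TVal (VInl v) | _ => t end.
Definition inr_t (t : term) : term :=
  match t with TVal v => TVal (VInr v) | _ => t end.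

Fixpoint interp (A : ty) : tdist -> Prop :=
  match A with
  | TyU => fun d => deq d (DTerm (TVal VStar))
  | TySum A1 A2 => fun d =>
      (exists u, interp A1 u /\ deq d (dmap inl_t u)) \/
      (exists u, interp A2 u /\ deq d (dmap inr_t u))
  | TySharp A1 => fun d => Span (interp A1) d /\ dnorm d = 1%R
  | TyArrow A1 A2 => fun d =>
      exists x b, deq d (DTerm (TVal (VLam x b))) /\ closed_val (VLam x b) /\
        forall v, interp A1 v -> exists w, red_star (subst_lin b x v) w /\ interp A2 w
  end.

(* Evaluation is deterministic, so the coefficients of the value distribution a distribution
   reduces to depend linearly on the distribution. Hence [λx.t] maps the qubit [α·tt + β·ff]
   to a value with coordinates [α a + β b], where [a] and [b] are the results on [tt] and
   [ff]; conversely, reducing leaf by leaf, any such [a], [b] give a reduction of this shape.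
   Since [‖αa + βb‖² = |α|²‖a‖² + |β|²‖b‖² + 2 Re(conj α β ⟨a|b⟩)], this map sends unit
   vectors to unit vectors exactly when [a] and [b] are orthonormal. *)

From Stdlib Require Import Reals List Lra Permutation ClassicalEpsilon FunctionalExtensionality.
From Coquelicot Require Import Coquelicot.
Import ListNotations.

Local Open Scope C_scope.

(** * Canonical forms *)

Definition opadd (a b : option C) : option C :=
  match a, b with
  | Some x, Some y => Some (x + y)
  | Some x, None => Some x
  | None, y => y
  end.

Fixpoint look (d : tdist) (t : term) : option C :=
  match d with
  | DZero => None
  | DTerm u => if teq_dec t u then Some (RtoC 1) else None
  | DPlus a b => opadd (look a t) (look b t)
  | DScal c a => option_map (Cmult c) (look a t)
  end.

Lemma clookup_cinsert t p l :
  clookup t (cinsert p l) =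
  if teq_dec t (fst p) then opadd (Some (snd p)) (clookup t l) else clookup t l.
Proof.
  induction l as [|q l IH]; simpl.
  - destruct (teq_dec t (fst p)); reflexivity.
  - destruct (teq_dec (fst p) (fst q)) as [e|n]; simpl;
      destruct (teq_dec t (fst q)); destruct (teq_dec t (fst p));
      simpl; first [congruence | exact IH].
Qed.

Lemma in_keys_cinsert k p l :
  In k (map fst (cinsert p l)) <-> k = fst p \/ In k (map fst l).
Proof.
  induction l as [|q l IH]; simpl.
  - intuition congruence.
  - destruct (teq_dec (fst p) (fst q)) as [e|n]; simpl.
    + rewrite e. intuition congruence.
    + rewrite IH. intuition congruence.
Qed.

Lemma nodup_cinsert p l : NoDup (map fst l) -> NoDup (map fst (cinsert p l)).
Proof.
  induction l as [|q l IH]; simpl; intros H.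
  - repeat constructor. simpl. tauto.
  - inversion H; subst. destruct (teq_dec (fst p) (fst q)); simpl; constructor; auto.
    rewrite in_keys_cinsert. intros [E|E]; congruence.
Qed.

Lemma nodup_fold_cinsert la l0 :
  NoDup (map fst l0) -> NoDup (map fst (fold_right cinsert l0 la)).
Proof. induction la; simpl; auto using nodup_cinsert. Qed.

Lemma clookup_notin t l : ~ In t (map fst l) -> clookup t l = None.
Proof.
  induction l as [|q l IH]; simpl; intros H; auto.
  destruct (teq_dec t (fst q)); [exfalso|]; auto.
Qed.

Lemma clookup_fold_cinsert t la l0 :
  NoDup (map fst la) ->
  clookup t (fold_right cinsert l0 la) = opadd (clookup t la) (clookup t l0).
Proof.
  induction la as [|p la IH]; simpl; intros H.
  - destruct (clookup t l0); reflexivity.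
  - inversion H; subst. rewrite clookup_cinsert, IH by auto.
    destruct (teq_dec t (fst p)) as [->|]; [|reflexivity].
    rewrite (clookup_notin _ la) by auto. destruct (clookup (fst p) l0); reflexivity.
Qed.

Lemma clookup_scal t c l :
  clookup t (map (fun p => (fst p, c * snd p)) l) = option_map (Cmult c) (clookup t l).
Proof.
  induction l as [|q l IH]; simpl; auto.
  destruct (teq_dec t (fst q)); auto.
Qed.

Lemma canon_nodup d : NoDup (map fst (canon d)).
Proof.
  induction d; simpl.
  - constructor.
  - repeat constructor. simpl. tauto.
  - apply nodup_fold_cinsert; auto.
  - rewrite map_map. auto.
Qed.

Lemma clookup_canon d t : clookup t (canon d) = look d t.
Proof.
  induction d; simpl; auto.
  - rewrite clookup_fold_cinsert by apply canon_nodup. congruence.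
  - rewrite clookup_scal. congruence.
Qed.

Lemma deq_look d e : deq d e <-> forall t, look d t = look e t.
Proof.
  unfold deq. setoid_rewrite clookup_canon. reflexivity.
Qed.

Lemma deq_refl d : deq d d.
Proof. intros t; reflexivity. Qed.

Lemma deq_sym d e : deq d e -> deq e d.
Proof. intros H t; auto. Qed.

Lemma deq_trans d e f : deq d e -> deq e f -> deq d f.
Proof. intros H1 H2 t; congruence. Qed.

Lemma deq_term u u' : deq (DTerm u) (DTerm u') -> u = u'.
Proof.
  rewrite deq_look. intros H. specialize (H u). simpl in H.
  destruct (teq_dec u u); destruct (teq_dec u u'); congruence.
Qed.

Fixpoint dsum (F : term -> C) (d : tdist) : C :=
  match d with
  | DZero => RtoC 0
  | DTerm u => F u
  | DPlus a b => dsum F a + dsum F b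
  | DScal c a => c * dsum F a
  end.

Definition wsum (F : term -> C) (l : list (term * C)) : C :=
  csum (map (fun p => snd p * F (fst p)) l).

Lemma wsum_cinsert F p l : wsum F (cinsert p l) = snd p * F (fst p) + wsum F l.
Proof.
  unfold wsum. induction l as [|q l IH]; simpl; [reflexivity|].
  destruct (teq_dec (fst p) (fst q)) as [->|]; simpl; [|rewrite IH]; ring.
Qed.

Lemma wsum_fold_cinsert F la l0 :
  wsum F (fold_right cinsert l0 la) = wsum F la + wsum F l0.
Proof.
  induction la as [|p la IH]; simpl.
  - unfold wsum at 2; simpl. ring.
  - rewrite wsum_cinsert, IH. unfold wsum; simpl. ring.
Qed.

Lemma wsum_scal F c l :
  wsum F (map (fun p => (fst p, c * snd p)) l) = c * wsum F l.
Proof.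
  unfold wsum. induction l as [|q l IH]; simpl; [|rewrite IH]; ring.
Qed.

Lemma dsum_canon F d : dsum F d = wsum F (canon d).
Proof.
  induction d; simpl.
  - reflexivity.
  - unfold wsum; simpl. ring.
  - rewrite wsum_fold_cinsert. congruence.
  - rewrite wsum_scal. congruence.
Qed.

Lemma csum_perm l l' : Permutation l l' -> csum l = csum l'.
Proof. induction 1; simpl; try ring; congruence. Qed.

Lemma in_clookup k c l : NoDup (map fst l) -> In (k, c) l <-> clookup k l = Some c.
Proof.
  induction l as [|[k' c'] l IH]; simpl; intros H.
  - split; [tauto | discriminate].
  - inversion H as [|? ? Hk' Hl]; subst. destruct (teq_dec k k') as [<-|n].
    + split.
      * intros [[= <-]|E]; [reflexivity|]. exfalso. apply Hk', (in_map fst _ _ E).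
      * intros [= <-]. auto.
    + rewrite <- IH by auto. split; [intros [[= <- <-]|E]; [congruence|] |]; auto.
Qed.

Lemma dsum_deq F d e : deq d e -> dsum F d = dsum F e.
Proof.
  intros H. rewrite !dsum_canon. apply csum_perm, Permutation_map.
  apply NoDup_Permutation; try eapply NoDup_map_inv; try apply canon_nodup.
  intros [k c]. rewrite !in_clookup, (H k) by apply canon_nodup. reflexivity.
Qed.

(* A key may carry the coefficient 0: [deq] does not identify [0·t] with [DZero]. *)
Definition key (d : tdist) (k : term) : Prop := look d k <> None.

Definition keys_in (P : term -> Prop) (d : tdist) : Prop := forall k, key d k -> P k.

Lemma keys_in_zero P : keys_in P DZero.
Proof. intros k Hk. exfalso. apply Hk. reflexivity. Qed.

Lemma keys_in_term P u : keys_in P (DTerm u) <-> P u.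
Proof.
  unfold keys_in, key; simpl. split.
  - intros H. apply H. destruct (teq_dec u u); congruence.
  - intros H k. destruct (teq_dec k u) as [->|]; congruence.
Qed.

Lemma keys_in_plus P a b : keys_in P (DPlus a b) <-> keys_in P a /\ keys_in P b.
Proof.
  unfold keys_in, key; simpl. split.
  - intros H; split; intros k Hk; apply H;
      destruct (look a k), (look b k); simpl; congruence.
  - intros [Ha Hb] k. specialize (Ha k). specialize (Hb k).
    destruct (look a k), (look b k); simpl; intros; auto; apply Ha || apply Hb; congruence.
Qed.

Lemma keys_in_scal P c a : keys_in P (DScal c a) <-> keys_in P a.
Proof.
  unfold keys_in, key; simpl. split; intros H k; specialize (H k);
    destruct (look a k); simpl in *; auto; intros; apply H; congruence.
Qed.

Lemma keys_in_deq P d e : deq d e -> keys_in P d -> keys_in P e.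
Proof. rewrite deq_look. intros E H k. unfold key. rewrite <- E. apply H. Qed.

Lemma keys_in_impl (P Q : term -> Prop) d :
  (forall k, P k -> Q k) -> keys_in P d -> keys_in Q d.
Proof. intros HPQ H k Hk. auto. Qed.

Lemma dsum_ext_keys F G d : keys_in (fun k => F k = G k) d -> dsum F d = dsum G d.
Proof.
  induction d; simpl; intros H.
  - reflexivity.
  - apply keys_in_term in H. exact H.
  - apply keys_in_plus in H as [H1 H2]. rewrite IHd1, IHd2 by auto. reflexivity.
  - apply keys_in_scal in H. rewrite IHd by auto. reflexivity.
Qed.

Lemma keys_in_dmap P f u : keys_in (fun k => P (f k)) u -> keys_in P (dmap f u).
Proof.
  induction u; simpl; intros H.
  - apply keys_in_zero.
  - apply keys_in_term. apply keys_in_term in H. exact H.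
  - apply keys_in_plus in H as [H1 H2]. apply keys_in_plus; auto.
  - apply keys_in_scal in H. apply keys_in_scal; auto.
Qed.

Lemma keys_in_lincomb P l : List.Forall (fun p => keys_in P (snd p)) l -> keys_in P (lincomb l).
Proof.
  induction l as [|[a u] l IH]; simpl; intros H; [apply keys_in_zero|].
  inversion H as [|? ? Hu Hl]. apply keys_in_plus. split; [apply keys_in_scal|]; auto.
Qed.

Fixpoint dbind (f : term -> tdist) (d : tdist) : tdist :=
  match d with
  | DZero => DZero
  | DTerm u => f u
  | DPlus a b => DPlus (dbind f a) (dbind f b)
  | DScal c a => DScal c (dbind f a)
  end.

Lemma dsum_dbind F f d : dsum F (dbind f d) = dsum (fun u => dsum F (f u)) d.
Proof. induction d; simpl; congruence. Qed.

Lemma keys_in_dbind P f d : keys_in (fun u => keys_in P (f u)) d -> keys_in P (dbind f d).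
Proof.
  induction d; simpl; intros H.
  - apply keys_in_zero.
  - apply keys_in_term in H. exact H.
  - apply keys_in_plus in H as [H1 H2]. apply keys_in_plus; auto.
  - apply keys_in_scal in H. apply keys_in_scal; auto.
Qed.

Lemma opadd_assoc a b c : opadd a (opadd b c) = opadd (opadd a b) c.
Proof. destruct a, b, c; simpl; auto; f_equal; ring. Qed.

Lemma opadd_comm a b : opadd a b = opadd b a.
Proof. destruct a, b; simpl; auto; f_equal; ring. Qed.

Lemma option_map_Cmult_opadd c a b :
  option_map (Cmult c) (opadd a b) = opadd (option_map (Cmult c) a) (option_map (Cmult c) b).
Proof. destruct a, b; simpl; auto; f_equal; ring. Qed.

Lemma option_map_Cmult_comp c a o :
  option_map (Cmult c) (option_map (Cmult a) o) = option_map (Cmult (c * a)) o.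
Proof. destruct o; simpl; auto; f_equal; ring. Qed.

Lemma red_deq d d' e e' : deq d e -> deq d' e' -> red d d' -> red e e'.
Proof.
  intros He He' (a & s & s' & r & H1 & H2 & Hs).
  exists a, s, s', r. split; [|split]; eauto using deq_trans, deq_sym.
Qed.

Lemma red_plus_l d d' e : red d d' -> red (DPlus d e) (DPlus d' e).
Proof.
  intros (a & s & s' & r & H1 & H2 & Hs). exists a, s, s', (DPlus r e).
  rewrite deq_look in H1, H2. split; [|split; [|exact Hs]]; apply deq_look; intros t;
    simpl; rewrite ?H1, ?H2; symmetry; apply opadd_assoc.
Qed.

Lemma red_plus_r d d' e : red d d' -> red (DPlus e d) (DPlus e d').
Proof.
  intros H. eapply red_deq; [| | apply red_plus_l, H];
    apply deq_look; intros t; apply opadd_comm.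
Qed.

Lemma red_scal c d d' : red d d' -> red (DScal c d) (DScal c d').
Proof.
  intros (a & s & s' & r & H1 & H2 & Hs). exists (c * a), s, s', (DScal c r).
  rewrite deq_look in H1, H2. split; [|split; [|exact Hs]]; apply deq_look; intros t;
    simpl; rewrite ?H1, ?H2; simpl; rewrite option_map_Cmult_opadd, option_map_Cmult_comp;
    reflexivity.
Qed.

Lemma red_star_trans a b c : red_star a b -> red_star b c -> red_star a c.
Proof. induction 1; eauto using RS_step. Qed.

Lemma red_star_plus d d' e e' :
  red_star d d' -> red_star e e' -> red_star (DPlus d e) (DPlus d' e').
Proof.
  intros Hd He. apply red_star_trans with (DPlus d' e).
  - induction Hd; [constructor | eapply RS_step; eauto using red_plus_l].
  - induction He; [constructor | eapply RS_step; eauto using red_plus_r].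
Qed.

Lemma red_star_scal c d d' : red_star d d' -> red_star (DScal c d) (DScal c d').
Proof. induction 1; [constructor | eapply RS_step; eauto using red_scal]. Qed.

Lemma red_star_dbind f g d :
  keys_in (fun u => red_star (f u) (g u)) d -> red_star (dbind f d) (dbind g d).
Proof.
  induction d; simpl; intros H.
  - constructor.
  - apply keys_in_term in H. exact H.
  - apply keys_in_plus in H as [H1 H2]. apply red_star_plus; auto.
  - apply keys_in_scal in H. apply red_star_scal; auto.
Qed.

Definition subst_leaf (t : tdist) (x : vname) (u : term) : tdist :=
  match u with TVal w => subst_dist t x w | _ => DZero end.

Lemma subst_lin_dbind t x v : subst_lin t x v = dbind (subst_leaf t x) v.
Proof. induction v; simpl; try congruence. destruct t0; reflexivity. Qed.

Definition delta (k u : term) : C := if teq_dec k u then RtoC 1 else RtoC 0.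

Definition coef (d : tdist) (k : term) : C := dsum (delta k) d.

Lemma dsum_supp2 u1 u2 F d :
  u1 <> u2 -> keys_in (fun k => k = u1 \/ k = u2) d ->
  dsum F d = coef d u1 * F u1 + coef d u2 * F u2.
Proof.
  intros Hu. unfold coef. induction d; simpl; intros H.
  - ring.
  - apply keys_in_term in H. unfold delta.
    destruct H as [-> | ->]; destruct (teq_dec u1 u1), (teq_dec u2 u2),
      (teq_dec u1 u2), (teq_dec u2 u1); try congruence; ring.
  - apply keys_in_plus in H as [H1 H2]. rewrite IHd1, IHd2 by auto. ring.
  - apply keys_in_scal in H. rewrite IHd by auto. ring.
Qed.

Lemma csum_delta a k l :
  csum (map (fun q => a * snd q * (if teq_dec k (fst q) then RtoC 1 else RtoC 0)) l) =
  a * wsum (delta k) l.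
Proof.
  unfold wsum, delta. induction l as [|q l IH]; simpl; [|rewrite IH]; ring.
Qed.

Lemma inner_dsum d e : inner d e = Cconj (dsum (fun k => Cconj (coef e k)) d).
Proof.
  unfold inner. rewrite dsum_canon. unfold wsum.
  induction (canon d) as [|p l IH]; simpl.
  - unfold Cconj, RtoC; simpl. f_equal; ring.
  - rewrite IH, Cplus_conj, Cmult_conj, Cconj_conj, csum_delta.
    unfold coef. rewrite dsum_canon. reflexivity.
Qed.

Definition ip2 (a1 a2 b1 b2 : C) : C := Cconj a1 * b1 + Cconj a2 * b2.

Lemma inner_supp2 u1 u2 d e :
  u1 <> u2 -> keys_in (fun k => k = u1 \/ k = u2) d ->
  inner d e = ip2 (coef d u1) (coef d u2) (coef e u1) (coef e u2).
Proof.
  intros Hu H. rewrite inner_dsum, (dsum_supp2 u1 u2) by auto. unfold ip2.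
  rewrite Cplus_conj, !Cmult_conj, !Cconj_conj. reflexivity.
Qed.

Definition ocons (o : option C) (u : term) (l : list (C * tdist)) : list (C * tdist) :=
  match o with Some a => (a, DTerm u) :: l | None => l end.

Lemma look_lincomb_ocons o u l k :
  look (lincomb (ocons o u l)) k = opadd (if teq_dec k u then o else None) (look (lincomb l) k).
Proof.
  destruct o as [a|]; simpl; destruct (teq_dec k u); simpl; try reflexivity.
  rewrite Cmult_1_r. reflexivity.
Qed.

Lemma lincomb_supp2 u1 u2 d :
  u1 <> u2 -> keys_in (fun k => k = u1 \/ k = u2) d ->
  deq d (lincomb (ocons (look d u1) u1 (ocons (look d u2) u2 []))).
Proof.
  intros Hu H. apply deq_look. intros k. rewrite !look_lincomb_ocons. simpl.
  destruct (teq_dec k u1) as [->|n1]; [|destruct (teq_dec k u2) as [->|n2]].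
  - destruct (teq_dec u1 u2); [congruence|]. destruct (look d u1); reflexivity.
  - destruct (look d u2); reflexivity.
  - destruct (look d k) eqn:E; [|reflexivity].
    exfalso. destruct (H k); [unfold key; congruence | congruence | congruence].
Qed.

(** * Determinism of evaluation *)

Definition is_value (u : term) : Prop := exists v, u = TVal v.

(* [ev s V]: [s] normalises, and [V k] is the coefficient of the value [k] in its normal form. *)
Inductive ev : term -> (term -> C) -> Prop :=
  | ev_val v : ev (TVal v) (fun k => delta k (TVal v))
  | ev_step s s' E : atomic s s' -> (forall k, key s' k -> ev k (E k)) ->
      ev s (fun k => dsum (fun u => E u k) s').

Lemma atomic_val v d : ~ atomic (TVal v) d.
Proof. inversion 1. Qed.

Lemma atomic_det s d : atomic s d -> forall d', atomic s d' -> d = d'.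
Proof.
  induction 1; intros d' H'; inversion H'; subst; try reflexivity;
    try (exfalso; eapply atomic_val; eassumption);
    f_equal; auto.
Qed.

Lemma ev_det s V : ev s V -> forall V', ev s V' -> V = V'.
Proof.
  induction 1 as [v | s s' E Hs _ IH]; intros V' H'.
  - inversion H'; [reflexivity|]. exfalso. eapply atomic_val; eassumption.
  - inversion H' as [| ? s'' E' Hs' HE']; subst.
    + exfalso. eapply atomic_val; eassumption.
    + rewrite <- (atomic_det _ _ Hs _ Hs') in HE' |- *.
      extensionality k. apply dsum_ext_keys. intros u Hu. rewrite (IH u Hu (E' u)); auto.
Qed.

Definition ev_coef (u : term) : term -> C := epsilon (inhabits (fun _ => RtoC 0)) (ev u).

Lemma ev_coef_spec u V : ev u V -> ev_coef u = V.
Proof. intros H. apply (ev_det u); [unfold ev_coef; apply epsilon_spec; eauto | exact H]. Qed.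

(* The coefficients of the normal form of [d]; [ev_coef u] is junk when [u] diverges. *)
Definition nf_coef (d : tdist) (k : term) : C := dsum (fun u => ev_coef u k) d.

Lemma red_star_evaluates d w :
  red_star d w -> keys_in is_value w ->
  keys_in (fun k => ev k (ev_coef k)) d /\ forall k, nf_coef d k = coef w k.
Proof.
  induction 1 as [w | d1 d2 w R _ IH]; intros Hw.
  - assert (Hev : keys_in (fun k => ev_coef k = fun t => delta t k) w).
    { intros k Hk. destruct (Hw k Hk) as [v ->]. apply ev_coef_spec, ev_val. }
    split.
    + intros k Hk. rewrite (Hev k Hk). destruct (Hw k Hk) as [v ->]. apply ev_val.
    + intros t. apply dsum_ext_keys. intros k Hk. rewrite (Hev k Hk). reflexivity.
  - destruct (IH Hw) as [E2 V2]. destruct R as (a & s & s' & r & H1 & H2 & Hs).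
    apply (keys_in_deq _ _ _ H2), keys_in_plus in E2 as [Es' Er].
    apply keys_in_scal in Es'.
    assert (Hev : ev s (nf_coef s')) by exact (ev_step s s' ev_coef Hs Es').
    assert (Es : ev_coef s = nf_coef s') by exact (ev_coef_spec _ _ Hev).
    split.
    + apply (keys_in_deq _ _ _ (deq_sym _ _ H1)), keys_in_plus. split; [|exact Er].
      apply keys_in_scal, keys_in_term. rewrite Es. exact Hev.
    + intros t. rewrite <- V2. unfold nf_coef.
      rewrite (dsum_deq _ _ _ H1), (dsum_deq _ _ _ H2). simpl. rewrite Es. reflexivity.
Qed.

Lemma nf_coef_red_star d w k : red_star d w -> keys_in is_value w -> nf_coef d k = coef w k.
Proof. intros R Hw. exact (proj2 (red_star_evaluates d w R Hw) k). Qed.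

(** * Qubits *)

Definition Ttt : term := TVal vtt.
Definition Tff : term := TVal vff.

Lemma Ttt_neq_Tff : Ttt <> Tff.
Proof. discriminate. Qed.

Definition is_bool (u : term) : Prop := u = Ttt \/ u = Tff.

Lemma keys_in_bool_value d : keys_in is_bool d -> keys_in is_value d.
Proof. apply keys_in_impl. intros k [-> | ->]; eexists; reflexivity. Qed.

Lemma dsum_bool F d : keys_in is_bool d -> dsum F d = coef d Ttt * F Ttt + coef d Tff * F Tff.
Proof. apply dsum_supp2, Ttt_neq_Tff. Qed.

Lemma coef_dbind_bool f d k :
  keys_in is_bool d ->
  coef (dbind f d) k = coef d Ttt * coef (f Ttt) k + coef d Tff * coef (f Tff) k.
Proof. intros H. unfold coef at 1. rewrite dsum_dbind, dsum_bool by exact H. reflexivity. Qed.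

Lemma inner_bool d e :
  keys_in is_bool d -> inner d e = ip2 (coef d Ttt) (coef d Tff) (coef e Ttt) (coef e Tff).
Proof. apply inner_supp2, Ttt_neq_Tff. Qed.

Definition sqnorm2 (a1 a2 : C) : R := Re (ip2 a1 a2 a1 a2).

Lemma keys_in_interp_B e : interp TyB e -> keys_in is_bool e.
Proof.
  intros [[u [Hu He]] | [u [Hu He]]];
    apply (keys_in_deq _ _ _ (deq_sym _ _ He)), keys_in_dmap;
    apply (keys_in_deq _ _ _ (deq_sym _ _ Hu)), keys_in_term;
    [left | right]; reflexivity.
Qed.

Lemma interp_B_Ttt : interp TyB (DTerm Ttt).
Proof. left. exists (DTerm (TVal VStar)). split; apply deq_refl. Qed.

Lemma interp_B_Tff : interp TyB (DTerm Tff).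
Proof. right. exists (DTerm (TVal VStar)). split; apply deq_refl. Qed.

Lemma dnorm_eq_1 d : dnorm d = 1%R <-> Re (inner d d) = 1%R.
Proof.
  unfold dnorm. split; intros H.
  - destruct (Rlt_or_le (Re (inner d d)) 0) as [L|L].
    + rewrite sqrt_neg_0 in H by lra. lra.
    + rewrite <- (sqrt_sqrt _ L), H. ring.
  - rewrite H. apply sqrt_1.
Qed.

Lemma interp_sharpB d :
  interp (TySharp TyB) d <-> keys_in is_bool d /\ sqnorm2 (coef d Ttt) (coef d Tff) = 1%R.
Proof.
  unfold sqnorm2. cbn [interp]. rewrite dnorm_eq_1. split.
  - intros [[l [Hl Hd]] Hn].
    assert (Hb : keys_in is_bool d).
    { apply (keys_in_deq _ _ _ (deq_sym _ _ Hd)), keys_in_lincomb.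
      eapply Forall_impl; [|exact Hl]. intros p. apply keys_in_interp_B. }
    rewrite <- inner_bool by exact Hb. auto.
  - intros [Hb Hn]. rewrite <- inner_bool in Hn by exact Hb. split; [|exact Hn].
    exists (ocons (look d Ttt) Ttt (ocons (look d Tff) Tff [])). split.
    + destruct (look d Ttt), (look d Tff); repeat apply Forall_cons;
        try apply Forall_nil; first [exact interp_B_Ttt | exact interp_B_Tff].
    + apply lincomb_supp2; [apply Ttt_neq_Tff | exact Hb].
Qed.

Definition qubit (a b : C) : tdist := DPlus (DScal a (DTerm Ttt)) (DScal b (DTerm Tff)).

Lemma coef_qubit a b : coef (qubit a b) Ttt = a /\ coef (qubit a b) Tff = b.
Proof.
  unfold coef, delta; simpl. pose proof Ttt_neq_Tff.
  destruct (teq_dec Ttt Ttt), (teq_dec Ttt Tff), (teq_dec Tff Ttt), (teq_dec Tff Tff);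
    try congruence; split; ring.
Qed.

Lemma keys_in_qubit a b : keys_in is_bool (qubit a b).
Proof.
  apply keys_in_plus. split; apply keys_in_scal, keys_in_term; [left | right]; reflexivity.
Qed.

Lemma sharp_qubit a b : sqnorm2 a b = 1%R -> interp (TySharp TyB) (qubit a b).
Proof.
  intros H. apply interp_sharpB. destruct (coef_qubit a b) as [-> ->].
  split; [apply keys_in_qubit | exact H].
Qed.

Lemma sharp_bool u : is_bool u -> interp (TySharp TyB) (DTerm u).
Proof.
  intros Hu. apply interp_sharpB. split; [apply keys_in_term, Hu|].
  unfold sqnorm2, ip2, coef, delta; simpl. pose proof Ttt_neq_Tff.
  destruct Hu as [-> | ->]; destruct (teq_dec Ttt Ttt), (teq_dec Tff Tff),
    (teq_dec Ttt Tff), (teq_dec Tff Ttt); try congruence; simpl; ring.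
Qed.

Lemma sqnorm2_lincomb al be a1 a2 b1 b2 :
  sqnorm2 (al * a1 + be * b1) (al * a2 + be * b2) =
  (Re (Cconj al * al) * sqnorm2 a1 a2 + Re (Cconj be * be) * sqnorm2 b1 b2
   + 2 * Re (Cconj al * be * ip2 a1 a2 b1 b2))%R.
Proof.
  destruct al, be, a1, a2, b1, b2. unfold sqnorm2, ip2, Cconj, Cmult, Cplus, Re; simpl. ring.
Qed.

Lemma sqnorm2_lincomb_orthonormal al be a1 a2 b1 b2 :
  sqnorm2 a1 a2 = 1%R -> sqnorm2 b1 b2 = 1%R -> ip2 a1 a2 b1 b2 = C_0 ->
  sqnorm2 (al * a1 + be * b1) (al * a2 + be * b2) = sqnorm2 al be.
Proof.
  intros Ha Hb Hab. rewrite sqnorm2_lincomb, Ha, Hb, Hab.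
  destruct al, be. unfold sqnorm2, ip2, C_0, RtoC, Cconj, Cmult, Cplus, Re; simpl. ring.
Qed.

(* The unit vectors [(3/5, 4/5)] and [(3/5, 4i/5)] detect the real and the imaginary part
   of [ip2 a1 a2 b1 b2]. *)
Lemma ip2_eq0_of_isometry a1 a2 b1 b2 :
  sqnorm2 a1 a2 = 1%R -> sqnorm2 b1 b2 = 1%R ->
  sqnorm2 (RtoC (3/5) * a1 + RtoC (4/5) * b1) (RtoC (3/5) * a2 + RtoC (4/5) * b2) = 1%R ->
  sqnorm2 (RtoC (3/5) * a1 + (0, 4/5)%R * b1) (RtoC (3/5) * a2 + (0, 4/5)%R * b2) = 1%R ->
  ip2 a1 a2 b1 b2 = C_0.
Proof.
  intros Ha Hb Hre Him. rewrite !sqnorm2_lincomb, Ha, Hb in *.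
  destruct (ip2 a1 a2 b1 b2) as [p q].
  unfold C_0, RtoC, Cconj, Cmult, Re in *; simpl in *. f_equal; lra.
Qed.

Definition bool_case (v1 v2 : tdist) (u : term) : tdist := if teq_dec u Ttt then v1 else v2.

Lemma bool_case_Ttt v1 v2 : bool_case v1 v2 Ttt = v1.
Proof. unfold bool_case. destruct teq_dec; congruence. Qed.

Lemma bool_case_Tff v1 v2 : bool_case v1 v2 Tff = v2.
Proof. unfold bool_case. destruct teq_dec; [exfalso; apply Ttt_neq_Tff|]; auto. Qed.

Section Abstraction.

Variables (x : vname) (t : tdist).

Lemma nf_coef_subst_lin v k :
  keys_in is_bool v ->
  nf_coef (subst_lin t x v) k =
  coef v Ttt * nf_coef (subst_dist t x vtt) k + coef v Tff * nf_coef (subst_dist t x vff) k.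
Proof.
  intros Hv. unfold nf_coef at 1. rewrite subst_lin_dbind, dsum_dbind, dsum_bool by exact Hv.
  reflexivity.
Qed.

Lemma coef_red_star_subst_lin v w w1 w2 k :
  red_star (subst_dist t x vtt) w1 -> red_star (subst_dist t x vff) w2 ->
  red_star (subst_lin t x v) w ->
  keys_in is_bool v -> keys_in is_bool w1 -> keys_in is_bool w2 -> keys_in is_bool w ->
  coef w k = coef v Ttt * coef w1 k + coef v Tff * coef w2 k.
Proof.
  intros R1 R2 R Bv B1 B2 Bw.
  rewrite <- (nf_coef_red_star _ _ k R1), <- (nf_coef_red_star _ _ k R2),
    <- (nf_coef_red_star _ _ k R), nf_coef_subst_lin; auto using keys_in_bool_value.
Qed.

Lemma orthogonal_of_arrow :
  interp (TyArrow (TySharp TyB) (TySharp TyB)) (DTerm (TVal (VLam x t))) ->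
  exists v1 v2 : tdist,
    interp (TySharp TyB) v1 /\ interp (TySharp TyB) v2 /\
    red_star (subst_dist t x vtt) v1 /\ red_star (subst_dist t x vff) v2 /\
    inner v1 v2 = C_0.
Proof.
  intros (x' & b & Hd & _ & H). apply deq_term in Hd. injection Hd as <- <-.
  destruct (H _ (sharp_bool Ttt (or_introl eq_refl))) as (w1 & R1 & S1).
  destruct (H _ (sharp_bool Tff (or_intror eq_refl))) as (w2 & R2 & S2).
  exists w1, w2. do 4 (split; [assumption|]).
  apply interp_sharpB in S1 as [B1 N1], S2 as [B2 N2].
  assert (Hunit : forall a b, sqnorm2 a b = 1%R ->
    sqnorm2 (a * coef w1 Ttt + b * coef w2 Ttt) (a * coef w1 Tff + b * coef w2 Tff) = 1%R).
  { intros a b Hab. destruct (H _ (sharp_qubit a b Hab)) as (w & R & S).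
    apply interp_sharpB in S as [Bw Nw]. destruct (coef_qubit a b) as [Ea Eb].
    rewrite !(coef_red_star_subst_lin _ _ _ _ _ R1 R2 R), Ea, Eb in Nw; auto using keys_in_qubit. }
  rewrite inner_bool by exact B1. apply ip2_eq0_of_isometry; auto;
    apply Hunit; unfold sqnorm2, ip2, Cconj, Cmult, Cplus, Re; simpl; field.
Qed.

Lemma arrow_of_orthogonal (Hclosed : closed_val (VLam x t)) v1 v2 :
  interp (TySharp TyB) v1 -> interp (TySharp TyB) v2 ->
  red_star (subst_dist t x vtt) v1 -> red_star (subst_dist t x vff) v2 -> inner v1 v2 = C_0 ->
  interp (TyArrow (TySharp TyB) (TySharp TyB)) (DTerm (TVal (VLam x t))).
Proof.
  intros S1 S2 R1 R2 H12. apply interp_sharpB in S1 as [B1 N1], S2 as [B2 N2].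
  rewrite inner_bool in H12 by exact B1.
  exists x, t. split; [apply deq_refl|]. split; [exact Hclosed|].
  intros v Sv. apply interp_sharpB in Sv as [Bv Nv].
  exists (dbind (bool_case v1 v2) v). split.
  - rewrite subst_lin_dbind. apply red_star_dbind.
    apply (keys_in_impl is_bool); [|exact Bv].
    intros k [-> | ->]; simpl; rewrite ?bool_case_Ttt, ?bool_case_Tff; assumption.
  - apply interp_sharpB. split.
    + apply keys_in_dbind. apply (keys_in_impl is_bool); [|exact Bv].
      intros k _. unfold bool_case. destruct teq_dec; assumption.
    + rewrite !coef_dbind_bool, bool_case_Ttt, bool_case_Tff, sqnorm2_lincomb_orthonormal
        by assumption.
      exact Nv.
Qed.

End Abstraction.

Theorem proposition5 (x : vname) (t : tdist) (Hclosed : closed_val (VLam x t)) :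
  interp (TyArrow (TySharp TyB) (TySharp TyB)) (DTerm (TVal (VLam x t))) <->
  exists v1 v2 : tdist,
    interp (TySharp TyB) v1 /\ interp (TySharp TyB) v2 /\
    red_star (subst_dist t x vtt) v1 /\ red_star (subst_dist t x vff) v2 /\
    inner v1 v2 = C_0.
Proof.
  split.
  - apply orthogonal_of_arrow.
  - intros (v1 & v2 & S1 & S2 & R1 & R2 & H12).
    apply (arrow_of_orthogonal x t Hclosed v1 v2); assumption.
Qed.
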